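(* Let $(G,+)$ be an abelian group with identity $0$. Let $M$ be any matroid over $G$ and let $N$ be a uniform matroid over $G$, both of the same rank $n$, such that $0\notin E(N)$. If $|E(M)|\le |E(N)|<p(G)$, then $M$ is matched to $N$.
   Context: $p(G)$ denotes the smallest cardinality of a nonzero subgroup of $G$. A matroid over $G$ is a matroid $M$ whose finite ground set $E(M)$ is a subset of $G$; all matroids are assumed loopless. A uniform matroid of rank $n$ is one in which the independent sets are exactly the subsets of the ground set of size at most $n$. For matroids $M,N$ over $G$ with $r(M)=r(N)=n>0$ and bases $\mathcal{M}=\{a_1,\dots,a_n\}$ of $M$ and $\mathcal{N}=\{b_1,\dots,b_n\}$ of $N$, $\mathcal{M}$ is matched to $\mathcal{N}$ if there is a permutation $\pi\in S_n$ with $a_i+b_{\pi(i)}\notin E(M)$ for all $i$. $M$ is matched to $N$ if for every basis $\mathcal{M}$ of $M$ there exists a basis $\mathcal{N}$ of $N$ such that $\mathcal{M}$ is matched to $\mathcal{N}$. *)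

From HB Require Import structures.
From mathcomp Require Import all_boot all_order all_algebra.
From mathcomp Require Import finmap.
Set Implicit Arguments. Unset Strict Implicit. Unset Printing Implicit Defensive.
Import GRing.Theory.
Local Open Scope fset_scope.
Local Open Scope ring_scope.

Record matroid (G : zmodType) := Matroid {
  ground : {fset G};
  indep : {fset G} -> bool;
  indep0 : indep fset0;
  indep_sub : forall A, indep A -> A `<=` ground;
  indep_hered : forall A B, indep B -> A `<=` B -> indep A;
  indep_aug : forall A B, indep A -> indep B -> (#|` A| < #|` B|)%N ->
      exists x, x \in B `\` A /\ indep (x |` A);
  loopless : forall x, x \in ground -> indep [fset x]
}.

Definition is_basis (G : zmodType) (M : matroid G) (B : {fset G}) : Prop :=
  indep M B /\ forall x, x \in ground M -> x \notin B -> ~~ indep M (x |` B).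

(* rank of M is n: bases have size n (all bases have the same size) *)
Definition has_rank (G : zmodType) (M : matroid G) (n : nat) : Prop :=
  exists B, is_basis M B /\ #|` B| = n.

Definition is_uniform (G : zmodType) (N : matroid G) (n : nat) : Prop :=
  forall A, indep N A = (A `<=` ground N) && (#|` A| <= n)%N.

Definition bases_matched (G : zmodType) (M : matroid G) (A B : {fset G}) : Prop :=
  exists f : G -> G,
    {in A &, injective f} /\ [fset f a | a in A] = B /\
    forall a, a \in A -> a + f a \notin ground M.

Definition matched (G : zmodType) (M N : matroid G) : Prop :=
  forall A, is_basis M A -> exists B, is_basis N B /\ bases_matched M A B.

(* k < p(G): every nonzero subgroup of G has more than k elements
   (i.e. is not covered by any list of length <= k). *)
Definition lt_pG (G : zmodType) (k : nat) : Prop :=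
  forall S : {pred G},
    0 \in S -> (forall x y, x \in S -> y \in S -> x - y \in S) ->
    (exists x, x \in S /\ x != 0) ->
    forall s : seq G, {subset S <= s} -> (k < size s)%N.

From mathcomp Require Import all_boot all_order all_algebra.
From mathcomp Require Import finmap zify.
From Stdlib Require Import Classical.
Set Implicit Arguments. Unset Strict Implicit. Unset Printing Implicit Defensive.
Import GRing.Theory.
Local Open Scope fset_scope.

(* By Hall's theorem it suffices that every X included in a basis A of M has at
   least |X| partners in E(N), i.e. elements b with a + b ∉ E(M) for some a in
   X. If C is the set of non-partners of X in E(N), then X + (C ∪ {0}) ⊆ E(M),
   so the Cauchy-Davenport inequality |X + Y| ≥ min(p(G), |X| + |Y| - 1) gives
   |X| + |C| ≤ |E(M)| ≤ |E(N)|: X has at least |X| partners. The n partners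
   chosen by Hall's theorem then form a basis of the uniform matroid N. *)

Lemma cardfs_gt1P (T : choiceType) (A : {fset T}) :
  reflect (exists x y, [/\ x \in A, y \in A & x != y]) (1 < #|` A|)%N.
Proof.
apply: (iffP idP) => [gt1|[x [y [xA yA xy]]]].
  have /fset0Pn[x xA] : A != fset0 by rewrite -cardfs_gt0 ltnW.
  have /fset0Pn[y /fsetD1P[yx yA]] : A `\ x != fset0.
    by move: gt1; rewrite (cardfsD1 x) xA add1n ltnS cardfs_gt0.
  by exists x, y; rewrite eq_sym.
have : [fset x; y] `<=` A by rewrite fsubUset !fsub1set xA yA.
by move/fsubset_leq_card; rewrite cardfs2 xy.
Qed.

Section Hall.
Variable T : choiceType.
Implicit Types (A X Y : {fset T}) (S : T -> {fset T}).

Definition nbhd S X : {fset T} := \bigcup_(x <- X) S x.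

Lemma nbhdP S X b : reflect (exists2 x, x \in X & b \in S x) (b \in nbhd S X).
Proof.
apply: (iffP (bigfcupP _ _ _ _)) => [[x /andP[xX _] bSx]|[x xX bSx]].
  by exists x.
by exists x; rewrite ?xX.
Qed.

Definition hall A S := forall X, X `<=` A -> (#|` X| <= #|` nbhd S X|)%N.

Lemma hall_card_gt0 A S a : hall A S -> a \in A -> (0 < #|` S a|)%N.
Proof.
move=> hS aA; have := hS [fset a]; rewrite fsub1set cardfs1 => /(_ aA).
suff -> : nbhd S [fset a] = S a by [].
by apply/fsetP => b; apply/nbhdP/idP => [[x /fset1P ->] //|bS]; exists a; rewrite ?fset11.
Qed.

Lemma hall_sdr_card_le1 A S : hall A S -> {in A, forall a, #|` S a| <= 1}%N ->
  exists f : T -> T, {in A &, injective f} /\ {in A, forall a, f a \in S a}.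
Proof.
move=> hS le1; pose f a := head a (S a).
have Sf a : a \in A -> S a = [fset f a].
  move=> aA; have /cardfs1P[x Sx] : #|` S a| == 1%N.
    by rewrite eqn_leq le1 // (hall_card_gt0 hS).
  have : f a \in S a by rewrite /f -nth0 mem_nth // Sx cardfs1.
  by rewrite Sx => /fset1P <-.
exists f; split=> [|a aA]; last by rewrite Sf ?fset11.
apply/card_in_imfsetP; rewrite eqn_leq leq_imfset_card.
suff <- : nbhd S A = f @` A by apply: hS.
rewrite -bigfcup_imfset1 /nbhd big_seq [RHS]big_seq.
by apply: eq_bigr => a aA; rewrite Sf.
Qed.

Definition shrink S a b : T -> {fset T} :=
  fun x => if x == a then S a `\ b else S x.

Lemma shrink_sub S a b x : shrink S a b x `<=` S x.
Proof. by rewrite /shrink; case: eqP => [->|_]; rewrite ?fsubsetDl. Qed.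

Lemma sum_card_shrink A S a b : a \in A -> b \in S a ->
  (\sum_(x <- A) #|` shrink S a b x| < \sum_(x <- A) #|` S x|)%N.
Proof.
move=> aA bS; rewrite !(bigD1_seq a) ?fset_uniq //= /shrink eqxx.
rewrite (cardfsD1 b (S a)) bS addSn ltnS leq_add2l leq_sum // => x _.
by case: eqP => [->|_]; rewrite ?fsubset_leq_card ?fsubsetDl.
Qed.

Lemma hall_shrink_violation A S a b : hall A S -> ~ hall A (shrink S a b) ->
  exists Y, [/\ Y `<=` A, a \notin Y & (#|` nbhd S Y `|` (S a `\ b)| <= #|` Y|)%N].
Proof.
move=> hS /not_all_ex_not[X /(imply_to_and (X `<=` A))[XA /negP]].
rewrite -ltnNge => small.
have aX : a \in X.
  apply: contraTT (hS X XA) => aX; rewrite -ltnNge.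
  apply: leq_ltn_trans small; apply: fsubset_leq_card; apply/fsubsetP => c.
  case/nbhdP => x xX cS; apply/nbhdP; exists x; rewrite // /shrink.
  by case: eqP xX => [->|//]; rewrite (negPf aX).
exists (X `\ a); split; first by rewrite (fsubset_trans (fsubsetDl _ _)).
  by rewrite in_fsetD1 eqxx.
move: small; rewrite (cardfsD1 a X) aX add1n ltnS; apply: leq_trans.
apply: fsubset_leq_card; apply/fsubsetP => c /fsetUP[/nbhdP[x /fsetD1P[xa xX] cS]|cS].
  by apply/nbhdP; exists x; rewrite // /shrink (negPf xa).
by apply/nbhdP; exists a; rewrite // /shrink eqxx.
Qed.

(* Rado's argument: two violating sets Y1, Y2 would contradict the
   submodularity of X |-> #|nbhd S X| on a |` (Y1 `|` Y2) and Y1 `&` Y2. *)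
Lemma hall_shrink A S a b1 b2 : hall A S -> a \in A -> b1 != b2 ->
  hall A (shrink S a b1) \/ hall A (shrink S a b2).
Proof.
move=> hS aA b12; apply: NNPP => /not_or_and[].
move=> /(hall_shrink_violation hS)[Y1 [Y1A aY1 small1]].
move=> /(hall_shrink_violation hS)[Y2 [Y2A aY2 small2]].
set I1 := _ `|` _ in small1; set I2 := _ `|` _ in small2.
have := hS (a |` (Y1 `|` Y2)); rewrite fsubUset fsub1set aA fsubUset Y1A Y2A.
rewrite cardfsU1 in_fsetU negb_or aY1 aY2 add1n => /(_ isT) hU.
have hI := hS (Y1 `&` Y2) (fsubset_trans (fsubsetIl _ _) Y1A).
have sU : nbhd S (a |` (Y1 `|` Y2)) `<=` I1 `|` I2.
  apply/fsubsetP => c /nbhdP[x]; rewrite in_fset1U in_fsetU => /or3P[/eqP->|xY|xY] cS.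
  - apply/fsetUP; case: (eqVneq c b1) cS => [-> b1S|cb1 cS].
      by right; apply/fsetUP; right; apply/fsetD1P.
    by left; apply/fsetUP; right; apply/fsetD1P.
  - by apply/fsetUP; left; apply/fsetUP; left; apply/nbhdP; exists x.
  - by apply/fsetUP; right; apply/fsetUP; left; apply/nbhdP; exists x.
have sI : nbhd S (Y1 `&` Y2) `<=` I1 `&` I2.
  apply/fsubsetP => c /nbhdP[x /fsetIP[xY1 xY2] cS].
  by apply/fsetIP; split; apply/fsetUP; left; apply/nbhdP; exists x.
have := fsubset_leq_card sU; have := fsubset_leq_card sI.
have := cardfsUI I1 I2; have := cardfsUI Y1 Y2; clearbody I1 I2; lia.
Qed.

Theorem hall_sdr A S : hall A S ->
  exists f : T -> T, {in A &, injective f} /\ {in A, forall a, f a \in S a}.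
Proof.
have [m] := ubnP (\sum_(a <- A) #|` S a|); elim: m S => // m IH S sum_lt hS.
have [/hasP[a aA /= Sa_gt1]|/hasPn Sa_le1] :=
  boolP (has (fun a => 1 < #|` S a|)%N A); last first.
  by apply: hall_sdr_card_le1 => // a aA; rewrite leqNgt Sa_le1.
suff [b [bS hall_b]] : exists b, b \in S a /\ hall A (shrink S a b).
  have [|f [f_inj fS]] := IH (shrink S a b) _ hall_b.
    by apply: leq_trans (sum_card_shrink aA bS) _; rewrite -ltnS.
  by exists f; split=> // x xA; apply: (fsubsetP (shrink_sub S a b x)); apply: fS.
have /fset0Pn[b1 b1S] : S a != fset0 by rewrite -cardfs_gt0 ltnW.
have /fset0Pn[b2 /fsetD1P[b21 b2S]] : S a `\ b1 != fset0.
  by move: Sa_gt1; rewrite (cardfsD1 b1) b1S add1n ltnS cardfs_gt0.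
by case: (hall_shrink hS aA b21) => ?; [exists b2 | exists b1].
Qed.
End Hall.

Local Open Scope ring_scope.

Section Sumset.
Variable G : zmodType.
Implicit Types (X Y : {fset G}) (k : nat).

Definition sumset X Y : {fset G} := [fset x + y | x in X, y in Y].

Lemma sumsetP X Y z :
  reflect (exists2 x, x \in X & exists2 y, y \in Y & z = x + y) (z \in sumset X Y).
Proof. exact: (iffP (imfset2P _ _ _ _ _)). Qed.

Lemma card_translate X e : #|` [fset x + e | x in X]| = #|` X|.
Proof. by rewrite card_imfset //; apply: addIr. Qed.

Lemma card_sumset_ge X Y y : y \in Y -> (#|` X| <= #|` sumset X Y|)%N.
Proof.
move=> yY; rewrite -(card_translate X y); apply/fsubset_leq_card/fsubsetP => z.
by case/imfsetP => x xX ->; apply/sumsetP; exists x => //; exists y.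
Qed.

(* The periods of X form a nonzero subgroup, covered by the list X - x0. *)
Lemma lt_pG_periodic k X x0 z : lt_pG G k -> x0 \in X -> z != 0 ->
  {in X, forall x, x + z \in X} -> {in X, forall x, x - z \in X} ->
  (k < #|` X|)%N.
Proof.
move=> hk x0X z0 Xz Xnz.
pose P : {pred G} := [pred w | all (fun x => x + w \in X) X && all (fun x => x - w \in X) X].
have PP w : reflect ({in X, forall x, x + w \in X} /\ {in X, forall x, x - w \in X}) (w \in P).
  by apply: (iffP andP) => -[/allP wD /allP wB]; split=> //; apply/allP.
rewrite -(size_map (fun x => x - x0)); apply: hk (P) _ _ _ _ _.
- by apply/PP; split=> x; rewrite ?addr0 ?subr0.
- move=> v w /PP[vD vB] /PP[wD wB]; apply/PP; split=> x xX.
    by rewrite addrCA addrC; apply: vD; apply: wB.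
  by rewrite opprB addrA; apply: vB; apply: wD.
- by exists z; split=> //; apply/PP.
- move=> w /PP[wD _]; apply/mapP; exists (x0 + w); first exact: wD.
  by rewrite addrC addKr.
Qed.

Definition etransL X Y e : {fset G} := X `|` [fset y + e | y in Y].
Definition etransR X Y e : {fset G} := [fset y in Y | y + e \in X].

Lemma sumset_etrans_sub X Y e :
  sumset (etransL X Y e) (etransR X Y e) `<=` sumset X Y.
Proof.
apply/fsubsetP => z /sumsetP[x /fsetUP[xX|/imfsetP[y yY ->]] [w]].
  by rewrite !inE => /andP[wY _] ->; apply/sumsetP; exists x => //; exists w.
rewrite !inE => /andP[wY wX] ->; apply/sumsetP; exists (w + e) => //; exists y => //.
by rewrite [LHS]addrC addrCA [RHS]addrC.
Qed.

Lemma card_etrans X Y e :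
  (#|` etransL X Y e| + #|` etransR X Y e| = #|` X| + #|` Y|)%N.
Proof.
have XYe : X `&` [fset y + e | y in Y] = [fset y + e | y in etransR X Y e].
  apply/fsetP => z; apply/fsetIP/imfsetP => [[zX /imfsetP[y yY zE]]|[y]].
    by exists y; rewrite // !inE yY -zE.
  by rewrite !inE => /andP[yY yX] ->; split; last by apply/imfsetP; exists y.
have := cardfsUI X [fset y + e | y in Y].
by rewrite XYe !card_translate.
Qed.

Theorem cauchy_davenport k X Y : lt_pG G k -> X != fset0 -> Y != fset0 ->
  (#|` sumset X Y| <= k)%N -> (#|` X| + #|` Y| <= #|` sumset X Y| + 1)%N.
Proof.
move=> hk; have [m] := ubnP #|` Y|; elim: m X Y => // m IH X Y ltYm X0 Y0 small.
have /fset0Pn[x0 x0X] := X0; have /fset0Pn[y0 y0Y] := Y0.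
have X_le_XY := card_sumset_ge X y0Y.
pose stable := all (fun x => all (fun y1 => all (fun y2 => x + y1 - y2 \in X) Y) Y) X.
have [/allP XYY|/allPn[x1 x1X /allPn[y1 y1Y /allPn[y2 y2Y out]]]] := boolP stable.
  have [/cardfs_gt1P[y1 [y2 [y1Y y2Y y12]]]|] := ltnP 1 #|` Y|; last first.
    by move: Y0; rewrite -cardfs_gt0; lia.
  have XYY' x u v : x \in X -> u \in Y -> v \in Y -> x + u - v \in X.
    by move=> xX uY vY; apply: (allP (allP (XYY x xX) u uY) v vY).
  have : (k < #|` X|)%N.
    apply: (lt_pG_periodic (z := y1 - y2) hk x0X); first by rewrite subr_eq0.
      by move=> x xX; rewrite addrA XYY'.
    by move=> x xX; rewrite opprB addrA XYY'.
  lia.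
(* Dyson's e-transform with e = x1 - y2 keeps y2 but drops y1 from Y. *)
pose e := x1 - y2.
have y2R : y2 \in etransR X Y e by rewrite !inE y2Y addrC subrK.
have y1R : y1 \notin etransR X Y e by rewrite !inE y1Y /= addrCA addrA.
have ltRm : (#|` etransR X Y e| < m)%N.
  have : etransR X Y e `<=` Y `\ y1.
    apply/fsubsetP => y yR; apply/fsetD1P; split; last by move: yR; rewrite !inE => /andP[].
    by apply: contraNneq y1R => <-.
  by move/fsubset_leq_card/leq_ltn_trans; apply; move: ltYm; rewrite (cardfsD1 y1 Y) y1Y.
have LR_sub := sumset_etrans_sub X Y e.
have L0 : etransL X Y e != fset0 by apply/fset0Pn; exists x0; apply/fsetUP; left.
have R0 : etransR X Y e != fset0 by apply/fset0Pn; exists y2.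
have := IH _ _ ltRm L0 R0 (leq_trans (fsubset_leq_card LR_sub) small).
by rewrite card_etrans => /leq_trans; apply; rewrite leq_add2r fsubset_leq_card.
Qed.
End Sumset.

Section Matroid.
Variable G : zmodType.

Lemma indep_card_le_basis (M : matroid G) A B :
  is_basis M A -> indep M B -> (#|` B| <= #|` A|)%N.
Proof.
move=> [Ai Amax] Bi; rewrite leqNgt; apply/negP => ltAB.
have [x [/fsetDP[xB xA] xAi]] := indep_aug Ai Bi ltAB.
by have := Amax x (fsubsetP (indep_sub Bi) x xB) xA; rewrite xAi.
Qed.

Lemma basis_card_eq (M : matroid G) A B :
  is_basis M A -> is_basis M B -> #|` A| = #|` B|.
Proof.
move=> hA hB; case: (hA) (hB) => [Ai _] [Bi _].
by apply/eqP; rewrite eqn_leq (indep_card_le_basis hB Ai) (indep_card_le_basis hA Bi).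
Qed.

Lemma uniform_basis (N : matroid G) n B :
  is_uniform N n -> B `<=` ground N -> #|` B| = n -> is_basis N B.
Proof.
move=> hU BN cB; split; first by rewrite hU BN cB leqnn.
by move=> x _ xB; rewrite hU cardfsU1 xB cB add1n ltnn andbF.
Qed.

Definition partners (E F : {fset G}) (a : G) : {fset G} :=
  [fset b in F | a + b \notin E].

Lemma hall_partners (E F A : {fset G}) :
  lt_pG G #|` F| -> 0 \notin F -> (#|` E| <= #|` F|)%N -> A `<=` E ->
  hall A (partners E F).
Proof.
move=> hp F0 EF AE X XA.
have [->|X0] := eqVneq X fset0; first by rewrite cardfs0.
set U := nbhd (partners E F) X; pose C := 0 |` (F `\` U).
have XC_E : sumset X C `<=` E.
  apply/fsubsetP => z /sumsetP[x xX [c /fset1UP[->|/fsetDP[cF cU]] ->]].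
    by rewrite addr0 (fsubsetP AE) ?(fsubsetP XA).
  apply: contraNT cU => xcE; apply/nbhdP; exists x => //.
  by rewrite !inE cF xcE.
have C0 : C != fset0 by apply/fset0Pn; exists 0; rewrite fsetU11.
have cardC : #|` C| = (#|` F `\` U|).+1 by rewrite cardfsU1 in_fsetD (negPf F0) andbF.
have := cauchy_davenport hp X0 C0 (leq_trans (fsubset_leq_card XC_E) EF).
have := cardfsID U F; have := fsubset_leq_card (fsubsetIr F U).
have := fsubset_leq_card XC_E; rewrite cardC; lia.
Qed.
End Matroid.

Theorem proposition2p8 (G : zmodType) (M N : matroid G) (n : nat) :
  (0 < n)%N -> has_rank M n -> has_rank N n -> is_uniform N n ->
  (0 : G) \notin ground N ->
  (#|` ground M| <= #|` ground N|)%N -> lt_pG G #|` ground N| ->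
  matched M N.
Proof.
move=> _ [B0 [B0basis B0n]] _ hU N0 EMN hp A Abasis.
have cardA : #|` A| = n by rewrite (basis_card_eq Abasis B0basis).
have AM : A `<=` ground M by case: Abasis => /indep_sub.
have [f [f_inj f_partner]] := hall_sdr (hall_partners hp N0 EMN AM).
have fP a : a \in A -> f a \in ground N /\ a + f a \notin ground M.
  by move=> aA; have := f_partner a aA; rewrite !inE => /andP.
exists (f @` A); split.
  apply: uniform_basis hU _ _; last by rewrite card_in_imfset.
  by apply/fsubsetP => _ /imfsetP[a aA ->]; case: (fP a aA).
by exists f; do 2!split=> //; move=> a /fP[].
Qed.
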